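(* Let $F:\mathbb{R}^d\to\mathbb{R}^d$ be $L$-Lipschitz, $G:\mathbb{R}^d\rightrightarrows\mathbb{R}^d$ maximally monotone, the solution set of $0\in F(x)+G(x)$ nonempty, $F+G$ maximally $\rho$-cohypomonotone with $\rho>0$, and $\eta>\rho$. Let $\alpha=1-\frac\rho\eta$, $\beta_k=\frac1{k+2}$, $R=\mathrm{Id}-J_{\eta(F+G)}$, $x^\star$ a solution, and let $(x_k)$ be random iterates with $x_{k+1}=\beta_kx_0+(1-\beta_k)((1-\alpha)x_k+\alpha\widetilde J_{\eta(F+G)}(x_k))$, where $\mathbb{E}_k\|\widetilde J_{\eta(F+G)}(x_k)-J_{\eta(F+G)}(x_k)\|^2\le\varepsilon_k^2$. Then for any $\gamma>0$ and $K\ge1$, $$\frac{\alpha K(K+1)}4\mathbb{E}\|R(x_K)\|^2\le\frac{K+1}{K\alpha}\|x^\star-x_0\|^2+\sum_{k=0}^{K-1}\left(\frac{\alpha(\gamma+1)}{2\gamma}(k+1)(k+2)\mathbb{E}[\varepsilon_k^2]+\frac{\gamma\alpha\,\mathbb{E}\|R(x_k)\|^2}2\right).$$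
   Context: For an operator $A$, $J_A=(\mathrm{Id}+A)^{-1}$. $F+G$ is $\rho$-cohypomonotone if $\langle u-v,x-y\rangle\ge-\rho\|u-v\|^2$ for all $(x,u),(y,v)$ in its graph; maximal means its graph is not strictly contained in that of another $\rho$-cohypomonotone operator. $\mathbb{E}_k$ is expectation conditioned on the randomness of $x_1,\dots,x_k$; $\varepsilon_k$ may be random and measurable with respect to that conditioning. *)

From HB Require Import structures.
From mathcomp Require Import all_boot all_order all_algebra.
From mathcomp Require Import all_classical all_reals all_analysis.
Set Implicit Arguments. Unset Strict Implicit. Unset Printing Implicit Defensive.
Import Order.TTheory GRing.Theory Num.Theory.
Local Open Scope ring_scope.
Local Open Scope classical_set_scope.

Section Defs.
Variables (R : realType) (d : nat).
Local Notation V := 'rV[R]_d.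

Definition edot (u v : V) : R := \sum_(i < d) u ord0 i * v ord0 i.
Definition enorm (u : V) : R := Num.sqrt (edot u u).

Definition e_lipschitz (L : R) (F : V -> V) : Prop :=
  forall x y, enorm (F x - F y) <= L * enorm (x - y).

Definition graph_sub (A B : V -> set V) : Prop := forall x, A x `<=` B x.

Definition monotone_op (A : V -> set V) : Prop :=
  forall x y u v, A x u -> A y v -> 0 <= edot (u - v) (x - y).

Definition max_monotone (A : V -> set V) : Prop :=
  monotone_op A /\
  forall B, monotone_op B -> graph_sub A B -> graph_sub B A.

Definition cohypomonotone (rho : R) (A : V -> set V) : Prop :=
  forall x y u v, A x u -> A y v ->
    - rho * edot (u - v) (u - v) <= edot (u - v) (x - y).

Definition max_cohypomonotone (rho : R) (A : V -> set V) : Prop :=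
  cohypomonotone rho A /\
  forall B, cohypomonotone rho B -> graph_sub A B -> graph_sub B A.

Definition op_add (F : V -> V) (G : V -> set V) : V -> set V :=
  fun x => [set F x + u | u in G x].

(* y is in J_{eta A}(x) = (Id + eta A)^{-1}(x), i.e. x ∈ y + eta A(y). *)
Definition in_resolvent (eta : R) (A : V -> set V) (x y : V) : Prop :=
  exists u, A y u /\ x = y + eta *: u.

End Defs.

Section Prob.
Variables (R : realType) (dT : measure_display) (T : measurableType dT)
  (P : probability T R).

Definition gen_filtration (d : nat) (X : nat -> T -> 'rV[R]_d) (k : nat)
  : set (set T) :=
  <<s [set A | exists i j (B : set R),
          (i <= k)%N /\ measurable B /\ A = (fun w => X i w ord0 j) @^-1` B] >>.

Definition measurable_wrt (Fk : set (set T)) (Y : T -> R) : Prop :=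
  forall B : set R, measurable B -> Fk (Y @^-1` B).

(* E[ Z | Fk ] <= Y almost surely, for Z >= 0 and Y Fk-measurable, stated via
   the defining property of conditional expectation:
   for every A in Fk, E[Z 1_A] <= E[Y 1_A]. *)
Definition cond_exp_le (Fk : set (set T)) (Z Y : T -> R) : Prop :=
  forall A, Fk A ->
    (\int[P]_(w in A) (Z w)%:E <= \int[P]_(w in A) (Y w)%:E)%E.

End Prob.

From HB Require Import structures.
From mathcomp Require Import all_boot all_order all_algebra.
From mathcomp Require Import all_classical all_reals all_analysis.
From mathcomp Require Import ring lra.
Import Order.TTheory GRing.Theory Num.Theory.
Local Open Scope ring_scope.
Local Open Scope classical_set_scope.
Set Implicit Arguments. Unset Strict Implicit.

(* Because F + G is rho-cohypomonotone, the residual R = Id - J of the resolvent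
   J = J_{eta(F+G)} is alpha-cocoercive with alpha = 1 - rho/eta, and
   alpha |R z|^2 <= <z - x*, R z> at a solution x*.  The scheme is the Halpern
   iteration y_(k+1) = b_k x0 + (1 - b_k) (y_k - alpha R y_k + alpha e_k) with the
   error e_k = J~(y_k) - J(y_k).  On every sample path the potential
   Q_k = k(k+1)/2 alpha |R y_k|^2 + (k+1) <y_k - x0, R y_k> starts at Q_0 = 0 and,
   by cocoercivity and Young's inequality with weight gamma, grows by at most
   alpha (gamma+1)/(2 gamma) (k+1)(k+2) |e_k|^2 + gamma alpha/2 |R y_k|^2 per step,
   while star-cocoercivity gives alpha K(K+1)/4 |R y_K|^2 <= Q_K
   + (K+1)/(K alpha) |x* - x0|^2.  Taking expectations only uses E|e_k|^2 <= E eps_k^2,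
   the conditional bound tested on the whole space; the integrands are measurable
   since J is Lipschitz. *)

Section Edot.
Variables (R : realType) (d : nat).
Local Notation V := 'rV[R]_d.
Implicit Types (u v w : V) (c : R).

Lemma edotC u v : edot u v = edot v u.
Proof. by apply: eq_bigr => i _; rewrite mulrC. Qed.

Lemma edotDl u v w : edot (u + v) w = edot u w + edot v w.
Proof. by rewrite /edot -big_split; apply: eq_bigr => i _; rewrite mxE mulrDl. Qed.

Lemma edotDr u v w : edot w (u + v) = edot w u + edot w v.
Proof. by rewrite edotC edotDl !(edotC w). Qed.

Lemma edotZl c u w : edot (c *: u) w = c * edot u w.
Proof. by rewrite /edot mulr_sumr; apply: eq_bigr => i _; rewrite mxE mulrA. Qed.

Lemma edotZr c u w : edot w (c *: u) = c * edot w u.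
Proof. by rewrite edotC edotZl edotC. Qed.

Lemma edotNl u w : edot (- u) w = - edot u w.
Proof. by rewrite -scaleN1r edotZl mulN1r. Qed.

Lemma edotNr u w : edot w (- u) = - edot w u.
Proof. by rewrite edotC edotNl edotC. Qed.

Lemma edot0l u : edot 0 u = 0.
Proof. by rewrite -(scale0r (0 : V)) edotZl mul0r. Qed.

Lemma edot_ge0 u : 0 <= edot u u.
Proof. by apply: sumr_ge0 => i _; rewrite -expr2 sqr_ge0. Qed.

Lemma enorm_sqr u : enorm u ^+ 2 = edot u u.
Proof. by rewrite sqr_sqrtr // edot_ge0. Qed.

Lemma sqr_coord_le_edot u (j : 'I_d) : u ord0 j ^+ 2 <= edot u u.
Proof.
rewrite /edot (bigD1 j) //= -expr2 lerDl.
by apply: sumr_ge0 => i _; rewrite -expr2 sqr_ge0.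
Qed.

End Edot.

Ltac edot_expand :=
  rewrite ?(edotDl, edotDr, edotNl, edotNr, edotZl, edotZr).

Section Cocoercive.
Variables (R : realType) (d : nat).
Local Notation V := 'rV[R]_d.

Lemma resolvent_cocoercive (rho eta : R) (A : V -> set V) (z1 z2 p1 p2 : V) :
  cohypomonotone rho A -> 0 < eta ->
  in_resolvent eta A z1 p1 -> in_resolvent eta A z2 p2 ->
  let r := (z1 - p1) - (z2 - p2) in
  (1 - rho / eta) * edot r r <= edot (z1 - z2) r.
Proof.
move=> coA eta_gt0 [u1 [Au1 ->]] [u2 [Au2 ->]] /=.
have -> : p1 + eta *: u1 - p1 - (p2 + eta *: u2 - p2) = eta *: (u1 - u2).
  by apply/rowP => i; rewrite !mxE; ring.
have -> : p1 + eta *: u1 - (p2 + eta *: u2) = (p1 - p2) + eta *: (u1 - u2).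
  by apply/rowP => i; rewrite !mxE; ring.
rewrite edotDl !edotZl !edotZr (edotC (p1 - p2)).
have := coA _ _ _ _ Au1 Au2.
set uu := edot (u1 - u2) (u1 - u2); set up := edot (u1 - u2) (p1 - p2) => coA12.
rewrite -subr_ge0.
have -> : eta * up + eta * (eta * uu) - (1 - rho / eta) * (eta * (eta * uu))
    = eta * (up + rho * uu) by field; rewrite gt_eqF.
by apply: mulr_ge0; [exact: ltW | lra].
Qed.

Lemma zero_in_resolvent (eta : R) (A : V -> set V) (xstar : V) :
  A xstar 0 -> in_resolvent eta A xstar xstar.
Proof. by exists 0; rewrite scaler0 addr0. Qed.

Lemma edotB_le_cocoercive (al : R) (z r : V) :
  0 < al -> al * edot r r <= edot z r ->
  edot (z - r) (z - r) <= (1 + al^-1 ^+ 2) * edot z z.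
Proof.
move=> al_gt0 co.
have zr : 0 <= edot z r.
  by apply: le_trans co; apply: mulr_ge0; [exact: ltW | exact: edot_ge0].
have rr_le : edot r r <= al^-1 * edot z r.
  by rewrite -(ler_pM2l al_gt0) mulrA divff ?gt_eqF // mul1r.
have := edot_ge0 (al^-1 *: z - r); edot_expand; rewrite (edotC r z) => sq.
edot_expand; nra.
Qed.

Lemma sqr_lipschitz_of_cocoercive_residual (al : R) (J : V -> V) :
  0 < al ->
  (forall z z', al * edot (z - J z - (z' - J z')) (z - J z - (z' - J z'))
                <= edot (z - z') (z - J z - (z' - J z'))) ->
  forall a b, edot (J a - J b) (J a - J b) <= (1 + al^-1 ^+ 2) * edot (a - b) (a - b).
Proof.
move=> al_gt0 coJ a b.
have -> : J a - J b = (a - b) - ((a - J a) - (b - J b)).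
  by apply/rowP => i; rewrite !mxE; ring.
exact: edotB_le_cocoercive (coJ a b).
Qed.

End Cocoercive.

Section Lyapunov.
Variables (R : realType) (d : nat).
Local Notation V := 'rV[R]_d.

(* The slack is [a (a + 1)] times the cocoercivity slack plus [al] times
   [a (a + 1) / 2 |r' - r - e|^2 + |g r - a e|^2 / (2 g) + a / (2 g) |e|^2]. *)
Lemma lyapunov_step (al g a : R) (y y' r r' e : V) :
  0 < al -> 0 < g -> 0 <= a ->
  y' = (a / (a + 1)) *: (y - al *: r + al *: e) ->
  al * edot (r' - r) (r' - r) <= edot (y' - y) (r' - r) ->
  (a + 1) * a / 2 * al * edot r' r' + (a + 1) * edot y' r' <=
  (a - 1) * a / 2 * al * edot r r + a * edot y r
  + (al * (g + 1) / (2 * g) * (a * (a + 1)) * edot e e + g * al / 2 * edot r r).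
Proof.
move=> al_gt0 g_gt0 a_ge0 Ey' co.
have a1_neq0 : a + 1 != 0 by rewrite gt_eqF // ltr_wpDl.
rewrite -subr_ge0.
have -> : (a - 1) * a / 2 * al * edot r r + a * edot y r
    + (al * (g + 1) / (2 * g) * (a * (a + 1)) * edot e e + g * al / 2 * edot r r)
    - ((a + 1) * a / 2 * al * edot r' r' + (a + 1) * edot y' r')
  = a * (a + 1) * (edot (y' - y) (r' - r) - al * edot (r' - r) (r' - r))
    + al * (a * (a + 1) / 2 * edot (r' - r - e) (r' - r - e)
            + (2 * g)^-1 * edot (g *: r - a *: e) (g *: r - a *: e)
            + a / (2 * g) * edot e e).
  rewrite Ey'; edot_expand.
  rewrite ?(edotC r' r) ?(edotC r' e) ?(edotC r e) ?(edotC r' y) ?(edotC r y) ?(edotC e y).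
  by field; rewrite a1_neq0 gt_eqF.
have aa1_ge0 : 0 <= a * (a + 1) by rewrite mulr_ge0 ?addr_ge0.
have g2_gt0 : 0 < 2 * g by rewrite mulr_gt0.
apply: addr_ge0; first by rewrite mulr_ge0 // subr_ge0.
apply: mulr_ge0; first exact: ltW.
apply: addr_ge0; first apply: addr_ge0.
- by apply: mulr_ge0; [exact: divr_ge0 | exact: edot_ge0].
- by apply: mulr_ge0; [rewrite invr_ge0 ltW | exact: edot_ge0].
- by apply: mulr_ge0; [rewrite divr_ge0 // ltW | exact: edot_ge0].
Qed.

Lemma lyapunov_final (al k : R) (y ys y0 r : V) :
  0 < al -> 0 < k -> al * edot r r <= edot (y - ys) r ->
  al * (k * (k + 1)) / 4 * edot r r <=
  (k + 1) / (k * al) * edot (ys - y0) (ys - y0)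
  + (k * (k + 1) / 2 * al * edot r r + (k + 1) * edot (y - y0) r).
Proof.
move=> al_gt0 k_gt0 co; rewrite -subr_ge0.
set w := ys - y0; set s := w + (k * al / 2) *: r.
have -> : y - y0 = (y - ys) + w by rewrite addrA subrK.
have -> : (k + 1) / (k * al) * edot w w
    + (k * (k + 1) / 2 * al * edot r r + (k + 1) * edot (y - ys + w) r)
    - al * (k * (k + 1)) / 4 * edot r r
  = (k + 1) / (k * al) * edot s s + (k + 1) * edot (y - ys) r.
  rewrite /s /w; edot_expand; rewrite (edotC r ys) (edotC r y0).
  by field; rewrite !gt_eqF.
have k1_ge0 : 0 <= k + 1 by rewrite addr_ge0 ?ltW.
apply: addr_ge0; apply: mulr_ge0 => //.
- by rewrite divr_ge0 // mulr_ge0 ?ltW.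
- exact: edot_ge0.
- by apply: le_trans co; apply: mulr_ge0; [exact: ltW | exact: edot_ge0].
Qed.

End Lyapunov.

Section HalpernPathwise.
Variables (R : realType) (d : nat).
Local Notation V := 'rV[R]_d.
Variables (al g : R) (r : V -> V) (xs x0 : V) (y e : nat -> V).
Hypotheses (al_gt0 : 0 < al) (g_gt0 : 0 < g).
Hypothesis r_cocoercive :
  forall z z', al * edot (r z - r z') (r z - r z') <= edot (z - z') (r z - r z').
Hypothesis r_star_cocoercive : forall z, al * edot (r z) (r z) <= edot (z - xs) (r z).
Hypothesis y0 : y 0%N = x0.
Hypothesis yS : forall k, y k.+1 =
  (k.+2%:R)^-1 *: x0 + (1 - (k.+2%:R)^-1) *: (y k - al *: r (y k) + al *: e k).

Let lyapunov (n : nat) := n%:R * (n%:R + 1) / 2 * al * edot (r (y n)) (r (y n))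
  + (n%:R + 1) * edot (y n - x0) (r (y n)).

Let err (k : nat) := al * (g + 1) / (2 * g) * (k.+1%:R * k.+2%:R) * edot (e k) (e k)
  + g * al / 2 * edot (r (y k)) (r (y k)).

Lemma lyapunov_succ k : lyapunov k.+1 <= lyapunov k + err k.
Proof.
have k1_ge0 : 0 <= k%:R + 1 :> R by rewrite addr_ge0.
have Ey : y k.+1 - x0 =
    (k%:R + 1) / (k%:R + 1 + 1) *: (y k - x0 - al *: r (y k) + al *: e k).
  apply/rowP => i; rewrite yS !mxE -!natr1.
  by field; rewrite gt_eqF // ltr_wpDl.
have co := r_cocoercive (y k.+1) (y k).
rewrite (_ : y k.+1 - y k = (y k.+1 - x0) - (y k - x0)) in co; last first.
  by rewrite opprB addrA subrK.
have := lyapunov_step al_gt0 g_gt0 k1_ge0 Ey co.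
rewrite /lyapunov /err -!natr1; lra.
Qed.

Lemma lyapunov_le_sum n : lyapunov n <= \sum_(k < n) err k.
Proof.
elim: n => [|n IHn].
  by rewrite /lyapunov y0 subrr edot0l big_ord0 !mul0r mulr0 addr0.
by rewrite big_ord_recr /=; apply: le_trans (lyapunov_succ n) _; rewrite lerD2r.
Qed.

Lemma halpern_pathwise_bound K : (0 < K)%N ->
  al * (K%:R * K.+1%:R) / 4 * edot (r (y K)) (r (y K)) <=
  K.+1%:R / (K%:R * al) * edot (xs - x0) (xs - x0) + \sum_(k < K) err k.
Proof.
move=> K_gt0; rewrite -natr1.
apply: le_trans (lyapunov_final x0 al_gt0 _ (r_star_cocoercive (y K))) _.
  by rewrite ltr0n.
by rewrite lerD2l; exact: lyapunov_le_sum.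
Qed.

End HalpernPathwise.

Section Quantization.
Variables (R : realType) (d : nat).
Local Notation V := 'rV[R]_d.

Definition grid (n : nat) (v : V) : 'rV[int]_d :=
  \row_i Num.floor (n.+1%:R * v ord0 i).

Definition grid_point (n : nat) (m : 'rV[int]_d) : V :=
  \row_i ((m ord0 i)%:~R / n.+1%:R).

Lemma sqr_sub_floor_div_le (c x : R) : 0 < c ->
  (x - (Num.floor (c * x))%:~R / c) ^+ 2 <= c^-1 ^+ 2.
Proof.
move=> c_gt0; have := floor_itv (c * x); rewrite intrD.
set f := (Num.floor (c * x))%:~R => /andP[f_le f_gt].
have -> : x - f / c = (c * x - f) / c by field; rewrite gt_eqF.
rewrite expr_div_n exprVn -[leRHS]mul1r ler_wpM2r ?invr_ge0 ?exprn_ge0 ?ltW //.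
have : 0 <= c * x - f <= 1 by apply/andP; split; lra.
by move=> /andP[? ?]; rewrite expr2; nra.
Qed.

Lemma edot_sub_grid_point_le n (v : V) :
  let q := grid_point n (grid n v) in
  edot (v - q) (v - q) <= d%:R * n.+1%:R^-1 ^+ 2.
Proof.
apply: le_trans (_ : \sum_(i < d) n.+1%:R^-1 ^+ 2 <= _).
  by apply: ler_sum => i _; rewrite !mxE -expr2 sqr_sub_floor_div_le.
by rewrite sumr_const card_ord mulr_natl.
Qed.

Lemma lipschitz_coord_grid_point_le (h : V -> V) (M : R) n (v : V) (j : 'I_d) :
  0 <= M -> (forall a b, edot (h a - h b) (h a - h b) <= M * edot (a - b) (a - b)) ->
  `|h v ord0 j - h (grid_point n (grid n v)) ord0 j| <= (M * d%:R + 1) / n.+1%:R.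
Proof.
move=> M_ge0 hlip; set q := grid_point n (grid n v); set c := n.+1%:R^-1.
have c_ge0 : 0 <= c by rewrite invr_ge0.
rewrite -ler_sqr ?nnegrE ?mulr_ge0 ?addr_ge0 ?mulr_ge0 //.
rewrite real_normK ?num_real // exprMn.
have := sqr_coord_le_edot (h v - h q) j; rewrite !mxE => /le_trans; apply.
apply: le_trans (hlip v q) _.
apply: le_trans (ler_wpM2l M_ge0 (edot_sub_grid_point_le n v)) _.
rewrite mulrA ler_wpM2r ?exprn_ge0 //.
have Md_ge0 : 0 <= M * d%:R by rewrite mulr_ge0.
nra.
Qed.

End Quantization.

Arguments grid_point {R d}.

Section Measurability.
Variables (R : realType) (d : nat) (dT : measure_display) (T : measurableType dT).
Local Notation V := 'rV[R]_d.

Definition measurable_rV (X : T -> V) : Prop :=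
  forall i, measurable_fun setT (fun w => X w ord0 i).

Lemma measurable_rV_cst (v : V) : measurable_rV (fun=> v).
Proof. by move=> i; exact: measurable_cst. Qed.

Lemma measurable_rVD (X Y : T -> V) :
  measurable_rV X -> measurable_rV Y -> measurable_rV (fun w => X w + Y w).
Proof.
move=> mX mY i; under eq_fun do rewrite mxE.
exact: measurable_realfun.measurable_funD.
Qed.

Lemma measurable_rVB (X Y : T -> V) :
  measurable_rV X -> measurable_rV Y -> measurable_rV (fun w => X w - Y w).
Proof.
move=> mX mY i; under eq_fun do rewrite !mxE.
exact: measurable_realfun.measurable_funB.
Qed.

Lemma measurable_rVZ (c : R) (X : T -> V) :
  measurable_rV X -> measurable_rV (fun w => c *: X w).
Proof.
move=> mX i; under eq_fun do rewrite mxE.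
exact: measurable_realfun.measurable_funM (measurable_cst c) (mX i).
Qed.

Lemma measurable_edot (X Y : T -> V) :
  measurable_rV X -> measurable_rV Y -> measurable_fun setT (fun w => edot (X w) (Y w)).
Proof.
move=> mX mY; apply: measurable_sum => i.
exact: measurable_realfun.measurable_funM.
Qed.

Lemma measurable_sqr_enormB (X Y : T -> V) :
  measurable_rV X -> measurable_rV Y ->
  measurable_fun setT (fun w => enorm (X w - Y w) ^+ 2).
Proof.
move=> mX mY; under eq_fun do rewrite enorm_sqr.
by apply: measurable_edot; apply: measurable_rVB.
Qed.

Lemma measurable_rV_iterates (x u : nat -> T -> V) (x0 : V) (a b : nat -> R)
    (c c' : R) :
  (forall w, x 0%N w = x0) -> (forall k, measurable_rV (u k)) ->
  (forall k w, x k.+1 w = a k *: x0 + b k *: (c *: x k w + c' *: u k w)) ->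
  forall k, measurable_rV (x k).
Proof.
move=> x_0 mu x_S; elim=> [|k IHk].
  by rewrite (_ : x 0%N = fun=> x0); [exact: measurable_rV_cst | exact: funext].
rewrite (funext (x_S k)); apply: measurable_rVD; first exact: measurable_rV_cst.
by apply: measurable_rVZ; apply: measurable_rVD; apply: measurable_rVZ.
Qed.

Lemma measurable_floor_eq (f : T -> R) (z : int) : measurable_fun setT f ->
  measurable [set w | Num.floor (f w) = z].
Proof.
move=> mf.
have -> : [set w | Num.floor (f w) = z] =
    setT `&` f @^-1` [set` Interval (BLeft (z%:~R : R)) (BLeft (z + 1)%:~R)].
  apply/seteqP; split => w /=; first by move=> <-; split => //; rewrite in_itv /= -floor_eq.
  by move=> [_]; rewrite in_itv /= -floor_eq => /eqP.
exact: mf measurableT _ (measurable_itv _).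
Qed.

Lemma measurable_grid_eq n (X : T -> V) (m : 'rV[int]_d) : measurable_rV X ->
  measurable [set w | grid n (X w) = m].
Proof.
move=> mX.
have -> : [set w | grid n (X w) = m] =
    \bigcap_(i in setT) [set w | Num.floor (n.+1%:R * X w ord0 i) = m ord0 i].
  apply/seteqP; split => w /=; first by move=> <- i _; rewrite mxE.
  by move=> gridE; apply/rowP => i; rewrite mxE gridE.
apply: fin_bigcap_measurable; first exact: finite_finset.
move=> i _; apply: measurable_floor_eq.
exact: measurable_realfun.measurable_funM (measurable_cst _) (mX i).
Qed.

Lemma measurable_fun_grid (g : 'rV[int]_d -> R) n (X : T -> V) :
  measurable_rV X -> measurable_fun setT (fun w => g (grid n (X w))).
Proof.
move=> mX _ Y mY; rewrite setTI.
have -> : (fun w => g (grid n (X w))) @^-1` Y =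
    \bigcup_m ([set w | grid n (X w) = m] `&` [set _ | Y (g m)]).
  apply/seteqP; split => w /=; first by move=> Yw; exists (grid n (X w)).
  by move=> [m _ [<-]].
apply: countable_bigcupT_measurable => // m.
have [Ygm|nYgm] := pselect (Y (g m)).
  have -> : [set _ | Y (g m)] = setT :> set T by apply/seteqP; split.
  by rewrite setIT; exact: measurable_grid_eq.
have -> : [set _ | Y (g m)] = set0 :> set T by apply/seteqP; split.
by rewrite setI0.
Qed.

(* Through the grid approximations, [h] is a pointwise limit of
   countably-valued measurable functions. *)
Lemma measurable_rV_comp_lipschitz (h : V -> V) (M : R) (X : T -> V) :
  0 <= M -> (forall a b, edot (h a - h b) (h a - h b) <= M * edot (a - b) (a - b)) ->
  measurable_rV X -> measurable_rV (fun w => h (X w)).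
Proof.
move=> M_ge0 hlip mX j /=.
apply: (measurable_realfun.measurable_fun_cvg
  (h := fun n w => h (grid_point n (grid n (X w))) ord0 j)).
  by move=> n; exact: (measurable_fun_grid (fun m => h (grid_point n m) ord0 j)).
move=> w _; apply/cvgrPdist_le => eps eps_gt0.
set B := M * d%:R + 1.
have B_gt0 : 0 < B by rewrite ltr_wpDl // mulr_ge0.
near=> n.
have n_lt : n.+1%:R^-1 < eps / B.
  by near: n; exact: (near_infty_natSinv_lt (PosNum (divr_gt0 eps_gt0 B_gt0))).
apply: le_trans (lipschitz_coord_grid_point_le n (X w) j M_ge0 hlip) _.
have B_neq0 : B != 0 by rewrite gt_eqF.
by rewrite -(divfK B_neq0 eps) mulrC ler_pM2r // ltW.
Unshelve. all: by end_near.
Qed.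

End Measurability.

Section Expectation.
Variables (R : realType) (dT : measure_display) (T : measurableType dT)
  (P : probability T R).

Lemma expectation_cst_add_sum (C : R) n (f : 'I_n -> T -> R) :
  0 <= C -> (forall k, measurable_fun setT (f k)) -> (forall k w, 0 <= f k w) ->
  (\int[P]_w (C + \sum_(k < n) f k w)%:E
   = C%:E + \sum_(k < n) \int[P]_w (f k w)%:E)%E.
Proof.
move=> C_ge0 mf f_ge0.
have mEf k := (measurable_realfun.measurable_EFinP _ _).2 (mf k).
under eq_integral do rewrite EFinD -sumEFin.
rewrite ge0_integralD //; last 2 first.
- by move=> w _; rewrite sume_ge0 // => k _; rewrite lee_fin.
- exact: emeasurable_sum.
rewrite integral_cst // -[in RHS](mule1 C%:E).
congr (_ * _ + _)%E; first exact: probability_setT.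
by rewrite ge0_integral_sum // => k w _; rewrite lee_fin.
Qed.

Lemma expectation_lincomb (a b : R) (f g : T -> R) :
  0 <= a -> 0 <= b -> measurable_fun setT f -> measurable_fun setT g ->
  (forall w, 0 <= f w) -> (forall w, 0 <= g w) ->
  (\int[P]_w (a * f w + b * g w)%:E
   = a%:E * \int[P]_w (f w)%:E + b%:E * \int[P]_w (g w)%:E)%E.
Proof.
move=> a_ge0 b_ge0 mf mg f_ge0 g_ge0.
have mEf := (measurable_realfun.measurable_EFinP _ _).2 mf.
have mEg := (measurable_realfun.measurable_EFinP _ _).2 mg.
under eq_integral do rewrite EFinD !EFinM.
rewrite ge0_integralD //; last 4 first.
- by move=> w _; rewrite lee_fin mulr_ge0.
- exact: emeasurable_funM.
- by move=> w _; rewrite lee_fin mulr_ge0.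
- exact: emeasurable_funM.
by rewrite !ge0_integralZl_EFin // => w _; rewrite lee_fin.
Qed.

Lemma expectation_le_affine (c C : R) (n : nat) (a b : 'I_n -> R)
    (f : T -> R) (g h : 'I_n -> T -> R) :
  0 <= c -> 0 <= C -> (forall k, 0 <= a k) -> (forall k, 0 <= b k) ->
  measurable_fun setT f -> (forall k, measurable_fun setT (g k)) ->
  (forall k, measurable_fun setT (h k)) ->
  (forall w, 0 <= f w) -> (forall k w, 0 <= g k w) -> (forall k w, 0 <= h k w) ->
  (forall w, c * f w <= C + \sum_(k < n) (a k * g k w + b k * h k w)) ->
  (c%:E * \int[P]_w (f w)%:E <= C%:E
     + \sum_(k < n) ((a k)%:E * \int[P]_w (g k w)%:E
                     + (b k)%:E * \int[P]_w (h k w)%:E))%E.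
Proof.
move=> c_ge0 C_ge0 a_ge0 b_ge0 mf mg mh f_ge0 g_ge0 h_ge0 bound.
have mterm k : measurable_fun setT (fun w => a k * g k w + b k * h k w).
  apply: measurable_realfun.measurable_funD;
    exact: measurable_realfun.measurable_funM (measurable_cst _) _.
rewrite -ge0_integralZl_EFin //; last 2 first.
- by move=> w _; rewrite lee_fin.
- exact/measurable_realfun.measurable_EFinP.
under eq_bigr do rewrite -expectation_lincomb //.
rewrite -expectation_cst_add_sum //; last by move=> k w; rewrite addr_ge0 ?mulr_ge0.
apply: ge0_le_integral => //.
- by move=> w _; rewrite lee_fin mulr_ge0.
- by apply/measurable_realfun.measurable_EFinP; exact: measurable_realfun.measurable_funM.
- apply/measurable_realfun.measurable_EFinP.
  exact: measurable_realfun.measurable_funD (measurable_cst _) (measurable_sum _ _).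
- by move=> w _; rewrite -EFinM lee_fin.
Qed.

Lemma cond_exp_le_integral d (X : nat -> T -> 'rV[R]_d) k (Z Y : T -> R) :
  cond_exp_le P (gen_filtration X k) Z Y ->
  (\int[P]_w (Z w)%:E <= \int[P]_w (Y w)%:E)%E.
Proof.
move=> /(_ setT); apply; rewrite -[X in gen_filtration _ _ X](setD0 setT) /gen_filtration.
by apply: sigma_algebraCD; exact: sigma_algebra0.
Qed.

End Expectation.

Section HalpernExpectation.
Variables (R : realType) (d : nat) (dT : measure_display) (T : measurableType dT)
  (P : probability T R).
Local Notation V := 'rV[R]_d.

Lemma halpern_expectation_bound (al g : R) (r : V -> V) (xs x0 : V)
    (x e : nat -> T -> V) (eps : nat -> T -> R) (K : nat) :
  0 < al -> 0 < g -> (0 < K)%N ->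
  (forall z z', al * edot (r z - r z') (r z - r z') <= edot (z - z') (r z - r z')) ->
  (forall z, al * edot (r z) (r z) <= edot (z - xs) (r z)) ->
  (forall w, x 0%N w = x0) ->
  (forall k w, x k.+1 w = (k.+2%:R)^-1 *: x0
     + (1 - (k.+2%:R)^-1) *: (x k w - al *: r (x k w) + al *: e k w)) ->
  (forall k, measurable_fun setT (fun w => enorm (r (x k w)) ^+ 2)) ->
  (forall k, measurable_fun setT (fun w => enorm (e k w) ^+ 2)) ->
  (forall k, \int[P]_w (enorm (e k w) ^+ 2)%:E <= \int[P]_w (eps k w ^+ 2)%:E)%E ->
  ((al * (K%:R * K.+1%:R) / 4)%:E * \int[P]_w (enorm (r (x K w)) ^+ 2)%:E <=
   (K.+1%:R / (K%:R * al) * enorm (xs - x0) ^+ 2)%:E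
   + \sum_(k < K) ((al * (g + 1) / (2 * g) * (k.+1%:R * k.+2%:R))%:E
                     * \int[P]_w (eps k w ^+ 2)%:E
                   + (g * al / 2)%:E * \int[P]_w (enorm (r (x k w)) ^+ 2)%:E))%E.
Proof.
move=> al_gt0 g_gt0 K_gt0 r_coco r_star x_0 x_S mr me e_le_eps.
have al_ge0 := ltW al_gt0; have g_ge0 := ltW g_gt0.
have coef_ge0 (k : nat) : 0 <= al * (g + 1) / (2 * g) * (k.+1%:R * k.+2%:R).
  apply: mulr_ge0; last exact: mulr_ge0.
  by apply: divr_ge0; [apply: mulr_ge0 => //; exact: addr_ge0 | exact: mulr_ge0].
apply: (le_trans (expectation_le_affine P
  (C := K.+1%:R / (K%:R * al) * enorm (xs - x0) ^+ 2)
  (a := fun k : 'I_K => al * (g + 1) / (2 * g) * (k.+1%:R * k.+2%:R))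
  (b := fun=> g * al / 2) (g := fun k w => enorm (e k w) ^+ 2)
  (h := fun k w => enorm (r (x k w)) ^+ 2) _ _ _ _ (mr K) (fun k => me k)
  (fun k => mr k) _ _ _ _)); try by move=> *; exact: sqr_ge0.
- by apply: divr_ge0 => //; apply: mulr_ge0 => //; exact: mulr_ge0.
- by apply: mulr_ge0; [apply: divr_ge0 => //; exact: mulr_ge0 | exact: sqr_ge0].
- by move=> k; exact: coef_ge0.
- by move=> _; apply: divr_ge0 => //; exact: mulr_ge0.
- move=> w; rewrite !enorm_sqr; under eq_bigr do rewrite !enorm_sqr.
  exact: (halpern_pathwise_bound (y := x^~ w) (e := e^~ w) al_gt0 g_gt0 r_coco r_star
    (x_0 w) (x_S^~ w)).
apply: leeD2l; apply: lee_sum => k _; apply: leeD2r.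
by apply: lee_wpmul2l; [rewrite lee_fin coef_ge0 | exact: e_le_eps].
Qed.

End HalpernExpectation.

Theorem lemmaC3 (R : realType) (d : nat)
  (F : 'rV[R]_d -> 'rV[R]_d) (G : 'rV[R]_d -> set 'rV[R]_d) (L rho eta : R)
  (J : 'rV[R]_d -> 'rV[R]_d) (xstar x0 : 'rV[R]_d)
  (dT : measure_display) (T : measurableType dT) (P : probability T R)
  (x Jt : nat -> T -> 'rV[R]_d) (eps : nat -> T -> R)
  (gamma : R) (K : nat) :
  e_lipschitz L F ->
  max_monotone G ->
  max_cohypomonotone rho (op_add F G) ->
  0 < rho -> rho < eta ->
  (* J = J_{eta(F+G)} (single-valued, full domain under the hypotheses) *)
  (forall z, in_resolvent eta (op_add F G) z (J z)) ->
  (* x* is a solution of 0 ∈ F(x) + G(x) *)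
  op_add F G xstar 0 ->
  (* the stochastic approximations of the resolvent are random vectors *)
  (forall k (j : 'I_d), measurable_fun setT (fun w => Jt k w ord0 j)) ->
  (forall w, x 0%N w = x0) ->
  (forall k w, x k.+1 w =
     (k.+2%:R)^-1 *: x0 + (1 - (k.+2%:R)^-1) *:
       ((1 - (1 - rho / eta)) *: x k w + (1 - rho / eta) *: Jt k w)) ->
  (forall k, measurable_wrt (gen_filtration x k) (eps k)) ->
  (forall k, cond_exp_le P (gen_filtration x k)
      (fun w => enorm (Jt k w - J (x k w)) ^+ 2) (fun w => eps k w ^+ 2)) ->
  0 < gamma -> (1 <= K)%N ->
  let alpha := 1 - rho / eta in
  let Rn := fun z => enorm (z - J z) ^+ 2 in
  (((alpha * (K%:R * (K.+1)%:R) / 4)%:E * \int[P]_w (Rn (x K w))%:E) <=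
   ((K.+1%:R / (K%:R * alpha) * enorm (xstar - x0) ^+ 2)%:E +
    \sum_(k < K)
      ((alpha * (gamma + 1) / (2 * gamma) * (k.+1%:R * k.+2%:R))%:E
         * \int[P]_w (eps k w ^+ 2)%:E
       + (gamma * alpha / 2)%:E * \int[P]_w (Rn (x k w))%:E)))%E.
Proof.
move=> _ _ [coA _] rho_gt0 rho_lt_eta hJ hstar mJt x_0 x_S _ hce g_gt0 K_gt0 /=.
set al := 1 - rho / eta.
have eta_gt0 : 0 < eta := lt_trans rho_gt0 rho_lt_eta.
have al_gt0 : 0 < al by rewrite subr_gt0 ltr_pdivrMr // mul1r.
pose r z := z - J z.
have r_coco z z' : al * edot (r z - r z') (r z - r z') <= edot (z - z') (r z - r z').
  exact: resolvent_cocoercive coA eta_gt0 (hJ z) (hJ z').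
have r_star z : al * edot (r z) (r z) <= edot (z - xstar) (r z).
  have := resolvent_cocoercive coA eta_gt0 (hJ z) (zero_in_resolvent eta hstar).
  by rewrite subrr subr0.
have mx := measurable_rV_iterates x_0 mJt x_S.
have J_lip := sqr_lipschitz_of_cocoercive_residual al_gt0 r_coco.
have mJx k := measurable_rV_comp_lipschitz (addr_ge0 ler01 (sqr_ge0 _)) J_lip (mx k).
apply: (halpern_expectation_bound (e := fun k w => Jt k w - J (x k w)) al_gt0 g_gt0
  K_gt0 r_coco r_star x_0).
- move=> k w; rewrite x_S; congr (_ + _ *: _).
  by apply/rowP => i; rewrite /r /al !mxE; ring.
- by move=> k; apply: measurable_sqr_enormB.
- by move=> k; apply: measurable_sqr_enormB.
- by move=> k; exact: cond_exp_le_integral (hce k).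
Qed.
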